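(* Let $f$ be a probability density on $(x_i,x_f)$, $-\infty<x_i<x_f\le\infty$, differentiable with $f'(x)<0$ on $(x_i,x_f)$, and let $\kappa>0$. If $\alpha\in\mathbb{R}\setminus\{2\}$, then $\mathcal{D}_\alpha[f^{[\kappa]}](s)=\big(\mathcal{D}_\alpha[f]\big)^{[\kappa^{\alpha-2}]}(s)$. If $\alpha=2$, then $\mathcal{D}_2[f^{[\kappa]}](s)=\mathcal{D}_2[f](s+\ln\kappa)$.
   Context: For $\kappa>0$ and a function $h$, $h^{[\kappa]}(x)=\kappa\,h(\kappa x)$. Down transform: for a density $f$ on $(x_i,x_f)$ with $f'<0$ and $\alpha\in\mathbb{R}$, $\mathcal{D}_\alpha[f](s)=f(x(s))^\alpha\,|f'(x(s))|^{-1}$, where $x(s)$ is the inverse of the change of variable $s(x)=f(x)^{2-\alpha}/(\alpha-2)$ if $\alpha\neq2$, and $s(x)=-\ln f(x)$ if $\alpha=2$ (in both cases $s'(x)=f^{1-\alpha}(x)|f'(x)|$). *)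

From HB Require Import structures.
From mathcomp Require Import all_boot all_order all_algebra.
From mathcomp Require Import all_classical all_reals all_analysis.
Set Implicit Arguments. Unset Strict Implicit. Unset Printing Implicit Defensive.
Import Order.TTheory GRing.Theory Num.Theory.
Import numFieldNormedType.Exports.
Local Open Scope classical_set_scope.
Local Open Scope ring_scope.

Definition openItv {R : realType} (xi : R) (xf : \bar R) : set R :=
  [set x | (xi%:E < x%:E)%E /\ (x%:E < xf)%E].

Definition rescale {R : realType} (k : R) (h : R -> R) : R -> R :=
  fun x => k * h (k * x).

Definition rescaleDom {R : realType} (k : R) (D : set R) : set R :=
  [set x | D (k * x)].

Definition sVar {R : realType} (alpha : R) (f : R -> R) (x : R) : R :=
  if alpha == 2 then - ln (f x) else f x `^ (2 - alpha) / (alpha - 2).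

(* x(s): the (unique, as s is strictly monotone) point of D with s(x) = s. *)
Definition xOfS {R : realType} (D : set R) (alpha : R) (f : R -> R) (s : R) : R :=
  get [set x | D x /\ sVar alpha f x = s].

Definition downT {R : realType} (D : set R) (alpha : R) (f : R -> R) (s : R) : R :=
  let x := xOfS D alpha f s in f x `^ alpha / `| derive1 f x |.

Definition downDom {R : realType} (D : set R) (alpha : R) (f : R -> R) : set R :=
  [set s | exists2 x, D x & sVar alpha f x = s].

From HB Require Import structures.
From mathcomp Require Import all_boot all_order all_algebra.
From mathcomp Require Import all_classical all_reals all_analysis.
From mathcomp Require Import ring lra.
Import Order.TTheory GRing.Theory Num.Theory.
Import numFieldNormedType.Exports.
Local Open Scope classical_set_scope.
Local Open Scope ring_scope.

(* Since f is strictly decreasing, hence positive and injective, on its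
   domain, the change of variable s = sVar alpha f x is injective, so
   D_alpha[f] (s(x)) = f(x)^alpha / |f'(x)|.  For h = f^[k] one has
   h(x) = k f(kx) and h'(x) = k^2 f'(kx), so with y = kx the value of
   D_alpha[h] at s_h(x) is k^(alpha-2) times the value of D_alpha[f] at
   s_f(y).  It remains to compare the two changes of variable:
   s_h(x) = k^(2-alpha) s_f(y) if alpha <> 2, and s_h(x) = s_f(y) - ln k
   if alpha = 2. *)

Section open_interval.
Context {R : realType} {xi : R} {xf : \bar R}.

Lemma openItv_segment x y :
  openItv xi xf x -> openItv xi xf y -> [set` `[x, y]] `<=` openItv xi xf.
Proof.
move=> [xi_x _] [_ y_xf] z /=; rewrite in_itv /= => /andP[xz zy]; split.
- by rewrite (lt_le_trans xi_x) ?lee_fin.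
- by rewrite (le_lt_trans _ y_xf) ?lee_fin.
Qed.

Lemma openItv_gt x : openItv xi xf x -> exists2 y, openItv xi xf y & x < y.
Proof.
move=> [xi_x]; case: xf => [b| |] x_xf; rewrite ?lte_fin in xi_x x_xf *.
- by exists ((x + b) / 2); first split; rewrite ?lte_fin; lra.
- by exists (x + 1); first split; rewrite ?ltry ?lte_fin; lra.
- by rewrite ltNge leNye in x_xf.
Qed.

End open_interval.

Section decreasing.
Context {R : realType} {D : set R} {f : R -> R}.
Hypothesis D_segment : forall x y, D x -> D y -> [set` `[x, y]] `<=` D.
Hypothesis f_derivable : forall x, D x -> derivable f x 1.
Hypothesis f'_lt0 : forall x, D x -> derive1 f x < 0.

Lemma derive1_lt0_decr x y : D x -> D y -> x < y -> f y < f x.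
Proof.
move=> Dx Dy xy; have sub_xy := D_segment _ _ Dx Dy.
have in_xy z : z \in `]x, y[ -> D z by move=> /subset_itv_oo_cc/sub_xy.
apply: (@ltr0_derive1_lt_cc _ f x y) => //.
- by move=> z /in_xy /f_derivable.
- by move=> z /in_xy /f'_lt0.
- by apply: derivable_within_continuous => z /sub_xy /f_derivable.
all: by rewrite in_itv /= lexx ltW.
Qed.

Lemma derive1_lt0_inj x y : D x -> D y -> f x = f y -> x = y.
Proof.
move=> Dx Dy fxy; case: (ltgtP x y) => // [xy|yx].
- by move: (derive1_lt0_decr _ _ Dx Dy xy); rewrite fxy ltxx.
- by move: (derive1_lt0_decr _ _ Dy Dx yx); rewrite fxy ltxx.
Qed.

Lemma derive1_lt0_gt0 :
  (forall x, D x -> 0 <= f x) -> (forall x, D x -> exists2 y, D y & x < y) ->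
  forall x, D x -> 0 < f x.
Proof.
move=> f_ge0 D_gt x Dx; have [y Dy xy] := D_gt x Dx.
exact: le_lt_trans (f_ge0 y Dy) (derive1_lt0_decr _ _ Dx Dy xy).
Qed.

End decreasing.

(* [sVar alpha f x] is convertible to [sVar alpha id (f x)]. *)
Lemma sVar_id_inj {R : realType} (alpha : R) :
  {in Num.pos &, injective (sVar alpha id)}.
Proof.
move=> a b a_gt0 b_gt0; rewrite /sVar; case: eqP => [_ /oppr_inj|/eqP a2 ab].
  exact: ln_inj.
have a2_neq0 : alpha - 2 != 0 by rewrite subr_eq0.
have a2'_neq0 : 2 - alpha != 0 by rewrite subr_eq0 eq_sym.
have /(congr1 (@ln R)) : a `^ (2 - alpha) = b `^ (2 - alpha).
  exact: (mulIf (invr_neq0 a2_neq0)).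
by rewrite !ln_powR => /(mulfI a2'_neq0); apply: ln_inj.
Qed.

Section change_of_variable.
Context {R : realType} {D : set R} (alpha : R) {f : R -> R}.
Hypothesis f_gt0 : forall x, D x -> 0 < f x.
Hypothesis f_inj : forall x y, D x -> D y -> f x = f y -> x = y.

Lemma sVar_inj x y : D x -> D y -> sVar alpha f x = sVar alpha f y -> x = y.
Proof.
move=> Dx Dy /(sVar_id_inj alpha _ _ (f_gt0 _ Dx) (f_gt0 _ Dy)); exact: f_inj.
Qed.

Lemma xOfS_sVar x : D x -> xOfS D alpha f (sVar alpha f x) = x.
Proof.
move=> Dx; rewrite /xOfS.
have [Dy sy] := @getPex _ [set y | D y /\ sVar alpha f y = sVar alpha f x]
  (ex_intro _ x (conj Dx erefl)).
exact: sVar_inj.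
Qed.

Lemma downT_sVar x :
  D x -> downT D alpha f (sVar alpha f x) = f x `^ alpha / `|derive1 f x|.
Proof. by move=> Dx; rewrite /downT xOfS_sVar. Qed.

End change_of_variable.

Section rescale.
Context {R : realType} {k : R} {f : R -> R}.
Hypothesis k_gt0 : 0 < k.

Lemma derive1_rescale x :
  derivable f (k * x) 1 -> derive1 (rescale k f) x = k ^+ 2 * derive1 f (k * x).
Proof.
move=> df.
have dk : derivable (fun y : R => k * y) x 1.
  by apply/derivable1_diffP; apply: differentiableM.
have dfk : derivable (f \o (fun y => k * y)) x 1.
  by apply/derivable1_diffP; apply: differentiable_comp; apply/derivable1_diffP.
rewrite /rescale (derive1Ml (f := f \o (fun y => k * y))) // derive1_comp //.
rewrite (derive1Ml (f := id)) ?derive1_id ?mulr1; last exact: derivable_id.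
by rewrite mulrCA mulrC expr2.
Qed.

Lemma sVar_rescale alpha x : alpha != 2 -> 0 < f (k * x) ->
  sVar alpha (rescale k f) x = k `^ (2 - alpha) * sVar alpha f (k * x).
Proof.
by move=> /negbTE a2 fkx_gt0; rewrite /sVar a2 /rescale powRM ?ltW // mulrA.
Qed.

Lemma sVar2_rescale x : 0 < f (k * x) ->
  sVar 2 (rescale k f) x = sVar 2 f (k * x) - ln k.
Proof.
by move=> fkx_gt0; rewrite /sVar eqxx /rescale lnM ?posrE // opprD addrC.
Qed.

Context {D : set R}.
Hypothesis f_derivable : forall x, D x -> derivable f x 1.
Hypothesis f_gt0 : forall x, D x -> 0 < f x.
Hypothesis f_inj : forall x y, D x -> D y -> f x = f y -> x = y.

Lemma downT_rescale_sVar alpha x : D (k * x) ->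
  downT (rescaleDom k D) alpha (rescale k f) (sVar alpha (rescale k f) x)
  = k `^ (alpha - 2) * downT D alpha f (sVar alpha f (k * x)).
Proof.
move=> Dkx; have k_neq0 : k != 0 by rewrite gt_eqF.
have rf_gt0 y : rescaleDom k D y -> 0 < rescale k f y.
  by move=> Dky; rewrite mulr_gt0 ?f_gt0.
have rf_inj y z : rescaleDom k D y -> rescaleDom k D z ->
    rescale k f y = rescale k f z -> y = z.
  by move=> Dky Dkz /(mulfI k_neq0) /(f_inj _ _ Dky Dkz) /(mulfI k_neq0).
rewrite (downT_sVar alpha rf_gt0 rf_inj) // (downT_sVar alpha f_gt0 f_inj) //.
rewrite derive1_rescale; last exact: f_derivable.
rewrite /rescale powRM ?ltW ?f_gt0 //.
have -> : k `^ alpha = k `^ (alpha - 2) * k ^+ 2.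
  by rewrite -powR_mulrn ?ltW // -powRD ?k_neq0 ?implybT // subrK.
rewrite normrM normrX gtr0_norm //.
have [->|f'_neq0] := eqVneq `|derive1 f (k * x)| 0.
  by rewrite !(mulr0, invr0).
by field; rewrite f'_neq0 k_neq0.
Qed.

End rescale.

Theorem proposition1 (R : realType) (xi : R) (xf : \bar R) (f : R -> R) (k alpha : R) :
  (xi%:E < xf)%E ->
  (forall x, openItv xi xf x -> 0 <= f x) ->
  (\int[lebesgue_measure]_(x in openItv xi xf) (f x)%:E = 1)%E ->
  (forall x, openItv xi xf x -> derivable f x 1) ->
  (forall x, openItv xi xf x -> derive1 f x < 0) ->
  0 < k ->
  (alpha != 2 ->
     forall s, downDom (rescaleDom k (openItv xi xf)) alpha (rescale k f) s ->
       downT (rescaleDom k (openItv xi xf)) alpha (rescale k f) s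
       = rescale (k `^ (alpha - 2)) (downT (openItv xi xf) alpha f) s) /\
  (alpha = 2 ->
     forall s, downDom (rescaleDom k (openItv xi xf)) 2 (rescale k f) s ->
       downT (rescaleDom k (openItv xi xf)) 2 (rescale k f) s
       = downT (openItv xi xf) 2 f (s + ln k)).
Proof.
move=> _ f_ge0 _ f_derivable f'_lt0 k_gt0.
have f_gt0 :=
  derive1_lt0_gt0 openItv_segment f_derivable f'_lt0 f_ge0 openItv_gt.
have f_inj := derive1_lt0_inj openItv_segment f_derivable f'_lt0.
have downT_rescale := downT_rescale_sVar k_gt0 f_derivable f_gt0 f_inj.
split=> [a2|_] s [x Dkx <-]; rewrite downT_rescale //.
- rewrite /rescale (sVar_rescale k_gt0 _ _ a2 (f_gt0 _ Dkx)) mulrA -powRD.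
    by rewrite subrKA subrr powRr0 mul1r.
  by rewrite (gt_eqF k_gt0) implybT.
- by rewrite (sVar2_rescale k_gt0 _ (f_gt0 _ Dkx)) subrK subrr powRr0 mul1r.
Qed.
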